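(* For $\boldsymbol\alpha\in\mathbb C^{n+1}$ with $\alpha_1^2+\cdots+\alpha_{n+1}^2=0$, integers $\ell\ge1$ and $k=1,\dots,n+1$, $$\mathbf A_k(\boldsymbol\alpha\cdot\mathbf x)^\ell=\hbar\,\ell\,\Big(\frac{2(\ell-1)+n-1}{2\ell+n-1}\Big)^{1/2}\alpha_k\,(\boldsymbol\alpha\cdot\mathbf x)^{\ell-1},$$ where $(\boldsymbol\alpha\cdot\mathbf x)=\sum_j\alpha_jx_j$ is regarded as a function on $S^n$; and $\mathbf A_k$ annihilates constants. Consequently $\mathbf A_k$ maps the space $\mathcal V_\ell$ of spherical harmonics of degree $\ell$ into $\mathcal V_{\ell-1}$ for $\ell>0$ and $\mathbf A_k\mathcal V_0=0$.
   Context: $n\in\{2,3,5\}$, $\hbar>0$. $\mathcal V_\ell$ is the space of restrictions to $S^n$ of harmonic homogeneous polynomials of degree $\ell$ on $\mathbb R^{n+1}$. $\Delta_{S^n}$ is the normalized spherical Laplacian on $L^2(S^n)$, the self-adjoint operator acting on $\mathcal V_k$ by the scalar $(k+\frac{n-1}{2})^2$. Define by functional calculus $\mathbf M=\sqrt{\tfrac{2}{n-1}}\,\Delta_{S^n}^{1/4}$ and $\mathbf N=\hbar(\sqrt{\Delta_{S^n}}-\tfrac{n-1}{2})$. Let $\tilde{\mathbf L}_{kj}$ be the restriction to $S^n$ of the angular momentum vector field $y_k\partial_{y_j}-y_j\partial_{y_k}$ on $\mathbb R^{n+1}$, and let $\mathbf E_k=\sum_{j=1}^{n+1}(-i x_j)(-i\hbar\tilde{\mathbf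 L}_{kj})+x_k\mathbf N$, where $x_j$ denotes multiplication by the $j$-th coordinate on $S^n$. Set $\mathbf A_k=\mathbf M\mathbf E_k\mathbf M^{-1}$. *)

From Stdlib Require Import Reals List ClassicalEpsilon.
Open Scope R_scope.

Record Cx := mkC { Cre : R ; Cim : R }.
Definition C0 : Cx := mkC 0 0.
Definition C1 : Cx := mkC 1 0.
Definition Ci : Cx := mkC 0 1.
Definition RtoC (r : R) : Cx := mkC r 0.
Definition Cadd (z w : Cx) : Cx := mkC (Cre z + Cre w) (Cim z + Cim w).
Definition Copp (z : Cx) : Cx := mkC (- Cre z) (- Cim z).
Definition Cmul (z w : Cx) : Cx :=
  mkC (Cre z * Cre w - Cim z * Cim w) (Cre z * Cim w + Cim z * Cre w).
Definition Cscale (r : R) (z : Cx) : Cx := Cmul (RtoC r) z.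
Fixpoint Cpow (z : Cx) (m : nat) : Cx :=
  match m with O => C1 | S m => Cmul (Cpow z m) z end.
Fixpoint Csum (m : nat) (f : nat -> Cx) : Cx :=
  match m with O => C0 | S m => Cadd (Csum m f) (f m) end.
Fixpoint sumR (m : nat) (f : nat -> R) : R :=
  match m with O => 0 | S m => sumR m f + f m end.
Fixpoint prodR (m : nat) (f : nat -> R) : R :=
  match m with O => 1 | S m => prodR m f * f m end.
Fixpoint sumN (m : nat) (f : nat -> nat) : nat :=
  match m with O => O | S m => (sumN m f + f m)%nat end.

(* Points of R^{n+1}: y : nat -> R, coordinates y 0, ..., y n
   (the paper's y_1, ..., y_{n+1}); coordinates >= n+1 are ignored. *)
Definition on_sphere (n : nat) (y : nat -> R) : Prop :=
  sumR (n + 1) (fun j => y j ^ 2) = 1.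

(* complex-valued functions; only their values on S^n matter *)
Definition sfun := (nat -> R) -> Cx.

(* the derivative at 0 of a real function (when it exists; it is unique) *)
Definition deriv0 (g : R -> R) : R :=
  epsilon (inhabits 0) (fun l => derivable_pt_lim g 0 l).

(* flow of the vector field y_k d/dy_j - y_j d/dy_k (a rotation; the identity
   when k = j) *)
Definition rot (k j : nat) (t : R) (y : nat -> R) : nat -> R :=
  fun i =>
    if Nat.eqb k j then y i
    else if Nat.eqb i j then y j * cos t + y k * sin t
    else if Nat.eqb i k then y k * cos t - y j * sin t
    else y i.

(* tilde L_{kj}: restriction to S^n of y_k d/dy_j - y_j d/dy_k, i.e. the
   derivative of f along the flow (which preserves S^n) *)
Definition Lvf (k j : nat) (f : sfun) : sfun :=
  fun y => mkC (deriv0 (fun t => Cre (f (rot k j t y))))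
               (deriv0 (fun t => Cim (f (rot k j t y)))).

Definition xmul (j : nat) (f : sfun) : sfun := fun y => Cmul (RtoC (y j)) (f y).

Definition shift (y : nat -> R) (j : nat) (t : R) : nat -> R :=
  fun i => if Nat.eqb i j then y i + t else y i.
Definition pd (j : nat) (P : sfun) : sfun :=
  fun y => mkC (deriv0 (fun t => Cre (P (shift y j t))))
               (deriv0 (fun t => Cim (P (shift y j t)))).
Definition laplacian (n : nat) (P : sfun) : sfun :=
  fun y => Csum (n + 1) (fun j => pd j (pd j P) y).
Definition harmonic (n : nat) (P : sfun) : Prop := forall y, laplacian n P y = C0.

(* a polynomial on R^{n+1}: list of (coefficient, exponent vector) *)
Definition monom (n : nat) (e : nat -> nat) (y : nat -> R) : R :=
  prodR (n + 1) (fun j => y j ^ e j).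
Definition evalP (n : nat) (ps : list (Cx * (nat -> nat))) : sfun :=
  fun y => fold_right (fun m acc => Cadd (Cmul (fst m) (RtoC (monom n (snd m) y))) acc)
                      C0 ps.

Definition Vsp (n l : nat) (f : sfun) : Prop :=
  exists ps : list (Cx * (nat -> nat)),
    Forall (fun m => sumN (n + 1) (snd m) = l) ps /\
    harmonic n (evalP n ps) /\
    forall y, on_sphere n y -> f y = evalP n ps y.

(* eigenvalue of Delta_{S^n} on V_k *)
Definition eig (n k : nat) : R := (INR k + (INR n - 1) / 2) ^ 2.

Definition is_decomp (n : nat) (f : sfun) (p : nat * (nat -> sfun)) : Prop :=
  (forall k, (k < fst p)%nat -> Vsp n k (snd p k)) /\
  forall y, on_sphere n y -> f y = Csum (fst p) (fun k => snd p k y).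

(* g(Delta_{S^n}) applied to f (f a finite sum of spherical harmonics) *)
Definition fcalc (n : nat) (g : R -> R) (f : sfun) : sfun :=
  let p := epsilon (inhabits (O, fun (_ : nat) (_ : nat -> R) => C0)) (is_decomp n f) in
  fun y => Csum (fst p) (fun k => Cscale (g (eig n k)) (snd p k y)).

Definition Mop (n : nat) : sfun -> sfun :=
  fcalc n (fun lam => sqrt (2 / (INR n - 1)) * sqrt (sqrt lam)).
Definition Minv (n : nat) : sfun -> sfun :=
  fcalc n (fun lam => / (sqrt (2 / (INR n - 1)) * sqrt (sqrt lam))).
Definition Nop (n : nat) (hbar : R) : sfun -> sfun :=
  fcalc n (fun lam => hbar * (sqrt lam - (INR n - 1) / 2)).

Definition Eop (n : nat) (hbar : R) (k : nat) (f : sfun) : sfun :=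
  fun y => Cadd
    (Csum (n + 1) (fun j =>
       Cmul (Cmul (Copp Ci) (RtoC (y j)))
            (Cmul (Cmul (Copp Ci) (RtoC hbar)) (Lvf k j f y))))
    (xmul k (Nop n hbar f) y).

Definition Aop (n : nat) (hbar : R) (k : nat) (f : sfun) : sfun :=
  Mop n (Eop n hbar k (Minv n f)).

Definition adot (n : nat) (alpha : nat -> Cx) : sfun :=
  fun y => Csum (n + 1) (fun j => Cmul (alpha j) (RtoC (y j))).

From Pilot Require Import Defs.
From Stdlib Require Import Reals Lra Lia List ClassicalEpsilon FunctionalExtensionality.
Open Scope R_scope.

(* On the sphere, [E_k] acts on a harmonic polynomial [P] homogeneous of degree [l] as [ħ ∂_k]:
   by Euler's identity the angular momentum part contributes [ħ (r^2 ∂_k P - l x_k P)], while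
   [x_k N P = ħ l x_k P].  Since [∂_k P] is again harmonic and homogeneous, of degree [l - 1],
   conjugation by [M] only rescales it by [M(l-1) / M(l)].  For [P = (α·x)^l] with [α·α = 0],
   [P] is harmonic and [∂_k P = l α_k (α·x)^(l-1)].
   Evaluating the functional calculus on [V_l] requires that an expansion [Σ_k P_k] into harmonic
   polynomials of degree [k] vanishing on the sphere has all [P_k = 0] there: after separating
   parities, multiplying by powers of [r^2] yields a homogeneous polynomial vanishing everywhere,
   and iterated Laplacians isolate its terms one by one. *)

Lemma Cx_ext (z w : Cx) : Cre z = Cre w -> Cim z = Cim w -> z = w.
Proof. destruct z, w; simpl; intros; subst; reflexivity. Qed.

Ltac Cring := apply Cx_ext; simpl; ring.

Lemma Cadd_0_l z : Cadd C0 z = z. Proof. Cring. Qed.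
Lemma Cadd_0_r z : Cadd z C0 = z. Proof. Cring. Qed.
Lemma Cmul_0_r z : Cmul z C0 = C0. Proof. Cring. Qed.
Lemma Cmul_1_l z : Cmul Defs.C1 z = z. Proof. Cring. Qed.
Lemma Cscale_C0 r : Cscale r C0 = C0. Proof. Cring. Qed.

Lemma Cpow_1 m : Cpow (RtoC 1) m = Defs.C1.
Proof. induction m as [|m IH]; simpl; [reflexivity|]. rewrite IH. Cring. Qed.

Lemma Cmul_RtoC_eq0 c z : c <> 0 -> Cmul (RtoC c) z = C0 -> z = C0.
Proof.
  intros Hc H. destruct z as [a b]. injection H; simpl; intros Hb Ha.
  apply Cx_ext; simpl; apply (Rmult_eq_reg_l c); lra.
Qed.

Lemma Cadd_opp_eq0 z w : Cadd z (Cmul (RtoC (-1)) w) = C0 -> z = w.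
Proof.
  destruct z as [a b], w as [c d]. intros H. injection H; simpl; intros.
  apply Cx_ext; simpl; lra.
Qed.

Lemma Csum_ext m f g : (forall k, (k < m)%nat -> f k = g k) -> Csum m f = Csum m g.
Proof.
  induction m as [|m IH]; simpl; intros H; [reflexivity|].
  rewrite IH by (intros; apply H; lia). rewrite H by lia. reflexivity.
Qed.

Lemma Csum_add m f g : Csum m (fun k => Cadd (f k) (g k)) = Cadd (Csum m f) (Csum m g).
Proof. induction m as [|m IH]; simpl; [Cring|]. rewrite IH. Cring. Qed.

Lemma Csum_scal m c f : Csum m (fun k => Cmul c (f k)) = Cmul c (Csum m f).
Proof. induction m as [|m IH]; simpl; [Cring|]. rewrite IH. Cring. Qed.

Lemma Csum_C0 m : Csum m (fun _ => C0) = C0.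
Proof. induction m as [|m IH]; simpl; [reflexivity|]. rewrite IH. Cring. Qed.

Lemma Csum_const m c : Csum m (fun _ => c) = Cmul (RtoC (INR m)) c.
Proof. induction m as [|m IH]; simpl Csum; [Cring|]. rewrite IH, S_INR. Cring. Qed.

Lemma Csum_RtoC m f : Csum m (fun j => RtoC (f j)) = RtoC (sumR m f).
Proof. induction m as [|m IH]; simpl; [reflexivity|]. rewrite IH. Cring. Qed.

Lemma Csum_first m f : Csum (S m) f = Cadd (f O) (Csum m (fun k => f (S k))).
Proof.
  induction m as [|m IH]; [simpl; Cring|].
  change (Csum (S (S m)) f) with (Cadd (Csum (S m) f) (f (S m))).
  rewrite IH. simpl. Cring.
Qed.

Lemma Csum_delta m d x : (d < m)%nat ->
  Csum m (fun k => if Nat.eqb k d then x else C0) = x.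
Proof.
  induction m as [|m IH]; intros H; [lia|]. simpl. destruct (Nat.eqb_spec m d).
  - subst. rewrite (Csum_ext _ _ (fun _ => C0)), Csum_C0; [Cring|].
    intros k Hk. destruct (Nat.eqb_spec k d); [lia|reflexivity].
  - rewrite IH by lia. Cring.
Qed.

Lemma Csum_trunc m a F : (a <= m)%nat ->
  Csum m (fun k => if Nat.ltb k a then F k else C0) = Csum a F.
Proof.
  induction m as [|m IH]; intros H.
  - replace a with O by lia. reflexivity.
  - destruct (Nat.eq_dec a (S m)) as [->|Ha].
    + apply Csum_ext. intros k Hk. destruct (Nat.ltb_spec k (S m)); [reflexivity|lia].
    + simpl. rewrite IH by lia. destruct (Nat.ltb_spec m a); [lia|Cring].
Qed.

Lemma Csum_even_odd M f :
  Csum (2 * M) f = Cadd (Csum M (fun i => f (2 * i)%nat)) (Csum M (fun i => f (2 * i + 1)%nat)).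
Proof.
  induction M as [|M IH]; [simpl; Cring|].
  replace (2 * S M)%nat with (S (S (2 * M))) by lia.
  change (Csum (S (S (2 * M))) f) with (Cadd (Cadd (Csum (2 * M) f) (f (2 * M)%nat)) (f (S (2 * M)))).
  rewrite IH. set (E := Csum M _). set (O := Csum M _).
  change (Cadd (Cadd (Cadd E O) (f (2 * M)%nat)) (f (S (2 * M))) =
          Cadd (Cadd E (f (2 * M)%nat)) (Cadd O (f (2 * M + 1)%nat))).
  rewrite Nat.add_1_r. Cring.
Qed.

Lemma sumR_ext m f g : (forall k, (k < m)%nat -> f k = g k) -> sumR m f = sumR m g.
Proof.
  induction m as [|m IH]; simpl; intros H; [reflexivity|].
  rewrite IH by (intros; apply H; lia). rewrite H by lia. reflexivity.
Qed.

Lemma sumR_add m f g : sumR m (fun i => f i + g i) = sumR m f + sumR m g.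
Proof. induction m as [|m IH]; simpl; [ring|]. rewrite IH; ring. Qed.

Lemma sumR_scal m a f : sumR m (fun j => a * f j) = a * sumR m f.
Proof. induction m as [|m IH]; simpl; [ring|]. rewrite IH; ring. Qed.

Lemma sumR_zero m : sumR m (fun _ => 0) = 0.
Proof. induction m as [|m IH]; simpl; [reflexivity|]. rewrite IH; ring. Qed.

Lemma sumR_delta m j a : (j < m)%nat -> sumR m (fun i => if Nat.eqb i j then a else 0) = a.
Proof.
  induction m as [|m IH]; intros H; [lia|]. simpl. destruct (Nat.eqb_spec m j).
  - subst. rewrite (sumR_ext _ _ (fun _ => 0)).
    + rewrite sumR_zero. ring.
    + intros k Hk. destruct (Nat.eqb_spec k j); [lia|reflexivity].
  - rewrite IH by lia. ring.
Qed.

Lemma sumR_nonneg m f : (forall k, 0 <= f k) -> 0 <= sumR m f.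
Proof. intros H. induction m as [|m IH]; simpl; [lra|]. specialize (H m). lra. Qed.

Lemma sumR_nonneg_eq0 m f : (forall k, 0 <= f k) -> sumR m f = 0 ->
  forall k, (k < m)%nat -> f k = 0.
Proof.
  induction m as [|m IH]; simpl; intros H S k Hk; [lia|].
  pose proof (sumR_nonneg m f H). pose proof (H m).
  destruct (Nat.eq_dec k m) as [->|]; [lra|]. apply IH; [auto|lra|lia].
Qed.

Lemma sumN_ext m e e' : (forall i, (i < m)%nat -> e i = e' i) -> sumN m e = sumN m e'.
Proof.
  induction m as [|m IH]; simpl; intros H; [reflexivity|].
  rewrite IH by (intros; apply H; lia). rewrite H by lia. reflexivity.
Qed.

Lemma sumN_add m e e' : sumN m (fun i => (e i + e' i)%nat) = (sumN m e + sumN m e')%nat.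
Proof. induction m as [|m IH]; simpl; [reflexivity|]. rewrite IH; lia. Qed.

Lemma sumN_zero m : sumN m (fun _ => O) = O.
Proof. induction m as [|m IH]; simpl; [reflexivity|]. rewrite IH; reflexivity. Qed.

Lemma sumN_delta m j : (j < m)%nat -> sumN m (fun i => if Nat.eqb i j then 1%nat else O) = 1%nat.
Proof.
  induction m as [|m IH]; intros H; [lia|]. simpl. destruct (Nat.eqb_spec m j).
  - subst. rewrite (sumN_ext _ _ (fun _ => O)), sumN_zero; [reflexivity|].
    intros i Hi. destruct (Nat.eqb_spec i j); [lia|reflexivity].
  - rewrite IH by lia. lia.
Qed.

Lemma sumN_ge m e k : (k < m)%nat -> (e k <= sumN m e)%nat.
Proof.
  induction m as [|m IH]; simpl; intros H; [lia|].
  destruct (Nat.eq_dec k m) as [->|]; [lia|]. specialize (IH ltac:(lia)). lia.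
Qed.

Lemma sumN_eq0 m e k : sumN m e = O -> (k < m)%nat -> e k = O.
Proof. intros H Hk. pose proof (sumN_ge m e k Hk). lia. Qed.

Lemma prodR_ext m F G : (forall i, (i < m)%nat -> F i = G i) -> prodR m F = prodR m G.
Proof.
  induction m as [|m IH]; simpl; intros H; [reflexivity|].
  rewrite IH by (intros; apply H; lia). rewrite H by lia. reflexivity.
Qed.

Lemma prodR_one m : prodR m (fun _ => 1) = 1.
Proof. induction m as [|m IH]; simpl; [reflexivity|]. rewrite IH; ring. Qed.

Lemma prodR_factor m F G j a : (j < m)%nat -> (forall i, i <> j -> F i = G i) ->
  F j = a * G j -> prodR m F = a * prodR m G.
Proof.
  induction m as [|m IH]; intros Hj H1 H2; [lia|]. simpl. destruct (Nat.eq_dec m j) as [->|].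
  - rewrite (prodR_ext j F G) by (intros; apply H1; lia). rewrite H2; ring.
  - rewrite IH by (auto; lia). rewrite H1 by auto. ring.
Qed.

Lemma deriv0_eq g l : derivable_pt_lim g 0 l -> deriv0 g = l.
Proof.
  intros H. unfold deriv0.
  pose proof (epsilon_spec (inhabits 0) (fun l => derivable_pt_lim g 0 l) (ex_intro _ l H)).
  eapply uniqueness_limite; eauto.
Qed.

Lemma D_ext f g x l l' : derivable_pt_lim f x l -> (forall t, f t = g t) -> l = l' ->
  derivable_pt_lim g x l'.
Proof. intros H E <-. replace g with f; [exact H|]. apply functional_extensionality; auto. Qed.

Lemma D_const c x : derivable_pt_lim (fun _ => c) x 0.
Proof. apply (derivable_pt_lim_const c). Qed.

Lemma D_plus f g x a b : derivable_pt_lim f x a -> derivable_pt_lim g x b ->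
  derivable_pt_lim (fun t => f t + g t) x (a + b).
Proof. intros. apply (derivable_pt_lim_plus f g); auto. Qed.

Lemma D_minus f g x a b : derivable_pt_lim f x a -> derivable_pt_lim g x b ->
  derivable_pt_lim (fun t => f t - g t) x (a - b).
Proof. intros. apply (derivable_pt_lim_minus f g); auto. Qed.

Lemma D_mult f g x a b : derivable_pt_lim f x a -> derivable_pt_lim g x b ->
  derivable_pt_lim (fun t => f t * g t) x (a * g x + f x * b).
Proof. intros. apply (derivable_pt_lim_mult f g); auto. Qed.

Lemma D_translate c x : derivable_pt_lim (fun t => c + t) x 1.
Proof. eapply D_ext; [apply D_plus; [apply D_const|apply derivable_pt_lim_id]|reflexivity|ring]. Qed.

Lemma D_scal_cos a : derivable_pt_lim (fun t => a * cos t) 0 0.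
Proof.
  eapply D_ext; [apply D_mult; [apply D_const|apply derivable_pt_lim_cos]|reflexivity|].
  rewrite sin_0; ring.
Qed.

Lemma D_scal_sin a : derivable_pt_lim (fun t => a * sin t) 0 a.
Proof.
  eapply D_ext; [apply D_mult; [apply D_const|apply derivable_pt_lim_sin]|reflexivity|].
  rewrite cos_0; ring.
Qed.

Definition has_pd (j : nat) (f g : sfun) : Prop := forall y,
  derivable_pt_lim (fun t => Cre (f (shift y j t))) 0 (Cre (g y)) /\
  derivable_pt_lim (fun t => Cim (f (shift y j t))) 0 (Cim (g y)).

Lemma has_pd_eq j f g : has_pd j f g -> pd j f = g.
Proof.
  intros H. apply functional_extensionality; intros y. unfold pd. destruct (H y) as [H1 H2].
  rewrite (deriv0_eq _ _ H1), (deriv0_eq _ _ H2). destruct (g y); reflexivity.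
Qed.

Lemma has_pd_ext j f g g' : has_pd j f g -> (forall y, g y = g' y) -> has_pd j f g'.
Proof. intros H E. replace g' with g; auto. apply functional_extensionality; auto. Qed.

Lemma shift0 y j : shift y j 0 = y.
Proof. apply functional_extensionality; intros i. unfold shift. destruct (Nat.eqb i j); ring. Qed.

Lemma has_pd_const j c : has_pd j (fun _ => c) (fun _ => C0).
Proof. intros y; split; apply D_const. Qed.

Lemma has_pd_var j i :
  has_pd j (fun y => RtoC (y i)) (fun _ => RtoC (if Nat.eqb i j then 1 else 0)).
Proof.
  intros y; split; simpl; [|apply D_const].
  unfold shift. destruct (Nat.eqb i j); [apply D_translate|apply D_const].
Qed.

Lemma has_pd_add j f f' g g' : has_pd j f f' -> has_pd j g g' ->
  has_pd j (fun y => Cadd (f y) (g y)) (fun y => Cadd (f' y) (g' y)).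
Proof. intros H1 H2 y; destruct (H1 y), (H2 y); split; simpl; apply D_plus; auto. Qed.

Lemma has_pd_mul j f f' g g' : has_pd j f f' -> has_pd j g g' ->
  has_pd j (fun y => Cmul (f y) (g y)) (fun y => Cadd (Cmul (f' y) (g y)) (Cmul (f y) (g' y))).
Proof.
  intros H1 H2 y; destruct (H1 y) as [a b], (H2 y) as [c d]; split; simpl.
  - eapply D_ext; [apply D_minus; [apply D_mult; [exact a|exact c]|apply D_mult; [exact b|exact d]]
                    |reflexivity|].
    cbv beta. rewrite !shift0. ring.
  - eapply D_ext; [apply D_plus; [apply D_mult; [exact a|exact d]|apply D_mult; [exact b|exact c]]
                    |reflexivity|].
    cbv beta. rewrite !shift0. ring.
Qed.

Inductive poly_expr : sfun -> Prop :=
| pe_const c : poly_expr (fun _ => c)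
| pe_var i : poly_expr (fun y => RtoC (y i))
| pe_add f g : poly_expr f -> poly_expr g -> poly_expr (fun y => Cadd (f y) (g y))
| pe_mul f g : poly_expr f -> poly_expr g -> poly_expr (fun y => Cmul (f y) (g y)).

Lemma poly_expr_has_pd f : poly_expr f -> forall j, exists g, poly_expr g /\ has_pd j f g.
Proof.
  induction 1 as [c|i|f g _ IHf _ IHg|f g Pf IHf Pg IHg]; intros j.
  - eexists; split; [apply pe_const|apply has_pd_const].
  - eexists; split; [apply pe_const|apply has_pd_var].
  - destruct (IHf j) as [a [Pa Ha]], (IHg j) as [b [Pb Hb]].
    exists (fun y => Cadd (a y) (b y)); split; [apply pe_add|apply has_pd_add]; auto.
  - destruct (IHf j) as [a [Pa Ha]], (IHg j) as [b [Pb Hb]].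
    exists (fun y => Cadd (Cmul (a y) (g y)) (Cmul (f y) (b y))).
    split; [apply pe_add; apply pe_mul|apply has_pd_mul]; auto.
Qed.

Lemma has_pd_pd j f : poly_expr f -> has_pd j f (pd j f).
Proof. intros H. destruct (poly_expr_has_pd f H j) as [g [_ Hg]]. rewrite (has_pd_eq _ _ _ Hg). auto. Qed.

Lemma poly_expr_pd j f : poly_expr f -> poly_expr (pd j f).
Proof. intros H. destruct (poly_expr_has_pd f H j) as [g [Pg Hg]]. rewrite (has_pd_eq _ _ _ Hg). auto. Qed.

Lemma poly_expr_Csum m F : (forall k, (k < m)%nat -> poly_expr (F k)) ->
  poly_expr (fun y => Csum m (fun k => F k y)).
Proof.
  induction m as [|m IH]; intros H; simpl; [apply pe_const|].
  apply pe_add; [apply IH; intros; apply H; lia|apply H; lia].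
Qed.

Lemma poly_expr_Cpow f m : poly_expr f -> poly_expr (fun y => Cpow (f y) m).
Proof. intros H. induction m; simpl; [apply pe_const|apply pe_mul; auto]. Qed.

Lemma pd_const j c : pd j (fun _ => c) = (fun _ => C0).
Proof. apply has_pd_eq, has_pd_const. Qed.

Lemma pd_var j i : pd j (fun y => RtoC (y i)) = (fun _ => RtoC (if Nat.eqb i j then 1 else 0)).
Proof. apply has_pd_eq, has_pd_var. Qed.

Lemma pd_add j f g : poly_expr f -> poly_expr g ->
  pd j (fun y => Cadd (f y) (g y)) = (fun y => Cadd (pd j f y) (pd j g y)).
Proof. intros; apply has_pd_eq, has_pd_add; apply has_pd_pd; auto. Qed.

Lemma pd_mul j f g : poly_expr f -> poly_expr g ->
  pd j (fun y => Cmul (f y) (g y)) = (fun y => Cadd (Cmul (pd j f y) (g y)) (Cmul (f y) (pd j g y))).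
Proof. intros; apply has_pd_eq, has_pd_mul; apply has_pd_pd; auto. Qed.

Lemma pd_scal j c f : poly_expr f -> pd j (fun y => Cmul c (f y)) = (fun y => Cmul c (pd j f y)).
Proof.
  intros. rewrite (pd_mul j (fun _ => c) f) by (auto; apply pe_const). rewrite pd_const.
  apply functional_extensionality; intros; Cring.
Qed.

Lemma pd_Csum j m F : (forall k, (k < m)%nat -> poly_expr (F k)) ->
  pd j (fun y => Csum m (fun k => F k y)) = (fun y => Csum m (fun k => pd j (F k) y)).
Proof.
  induction m as [|m IH]; intros H; simpl; [apply pd_const|].
  rewrite pd_add by (try apply poly_expr_Csum; intros; apply H; lia).
  rewrite IH by (intros; apply H; lia). reflexivity.
Qed.

Lemma pd_Cpow j A m : poly_expr A -> pd j (fun y => Cpow (A y) m) =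
  (fun y => Cmul (RtoC (INR m)) (Cmul (Cpow (A y) (m - 1)) (pd j A y))).
Proof.
  intros HA. induction m as [|m IH]; simpl Cpow.
  - rewrite pd_const. apply functional_extensionality; intros; Cring.
  - rewrite pd_mul, IH by (auto; apply poly_expr_Cpow; auto).
    apply functional_extensionality; intros y. rewrite S_INR.
    destruct m as [|m]; [simpl; Cring|].
    replace (S (S m) - 1)%nat with (S m) by lia. replace (S m - 1)%nat with m by lia.
    simpl Cpow. Cring.
Qed.

Lemma pd_comm f : poly_expr f -> forall i j, pd i (pd j f) = pd j (pd i f).
Proof.
  induction 1 as [c|k|f g Pf IHf Pg IHg|f g Pf IHf Pg IHg]; intros a b.
  - rewrite !pd_const. reflexivity.
  - rewrite !pd_var, !pd_const. reflexivity.
  - rewrite (pd_add b f g), (pd_add a f g) by auto.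
    rewrite (pd_add a (pd b f)), (pd_add b (pd a f)) by (apply poly_expr_pd; auto).
    rewrite IHf, IHg. reflexivity.
  - assert (P1 : forall c, poly_expr (pd c f)) by (intros; apply poly_expr_pd; auto).
    assert (P2 : forall c, poly_expr (pd c g)) by (intros; apply poly_expr_pd; auto).
    rewrite (pd_mul b), (pd_mul a) by auto.
    rewrite (pd_add a), (pd_add b) by (apply pe_mul; auto).
    rewrite !pd_mul by auto. rewrite IHf, IHg.
    apply functional_extensionality; intros y. Cring.
Qed.

(** * Harmonic homogeneous polynomials *)

Section Laplacian.
Variable n : nat.

Lemma poly_expr_lap f : poly_expr f -> poly_expr (laplacian n f).
Proof. intros H. apply (poly_expr_Csum (n + 1) (fun j => pd j (pd j f))). intros; do 2 apply poly_expr_pd; auto. Qed.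

Lemma lap_const c : laplacian n (fun _ => c) = (fun _ => C0).
Proof.
  apply functional_extensionality; intros y. unfold laplacian.
  rewrite (Csum_ext _ _ (fun _ => C0)), Csum_C0; [reflexivity|]. intros; rewrite !pd_const; reflexivity.
Qed.

Lemma lap_add f g : poly_expr f -> poly_expr g ->
  laplacian n (fun y => Cadd (f y) (g y)) = (fun y => Cadd (laplacian n f y) (laplacian n g y)).
Proof.
  intros Hf Hg. apply functional_extensionality; intros y. unfold laplacian.
  rewrite <- Csum_add. apply Csum_ext; intros j _.
  rewrite (pd_add j f g), (pd_add j (pd j f) (pd j g)) by (try apply poly_expr_pd; auto). reflexivity.
Qed.

Lemma lap_scal c f : poly_expr f -> laplacian n (fun y => Cmul c (f y)) = (fun y => Cmul c (laplacian n f y)).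
Proof.
  intros Hf. apply functional_extensionality; intros y. unfold laplacian.
  rewrite <- Csum_scal. apply Csum_ext; intros j _.
  rewrite (pd_scal j c f), (pd_scal j c (pd j f)) by (try apply poly_expr_pd; auto). reflexivity.
Qed.

Lemma lap_Csum K F : (forall k, (k < K)%nat -> poly_expr (F k)) ->
  laplacian n (fun y => Csum K (fun k => F k y)) = (fun y => Csum K (fun k => laplacian n (F k) y)).
Proof.
  induction K as [|K IH]; intros H; simpl; [apply lap_const|].
  rewrite lap_add by (try apply poly_expr_Csum; intros; apply H; lia).
  rewrite IH by (intros; apply H; lia). reflexivity.
Qed.

Lemma lap_mul F G : poly_expr F -> poly_expr G -> forall y,
  laplacian n (fun y => Cmul (F y) (G y)) y =
  Cadd (Cadd (Cmul (F y) (laplacian n G y)) (Cmul (G y) (laplacian n F y)))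
       (Cmul (RtoC 2) (Csum (n + 1) (fun j => Cmul (pd j F y) (pd j G y)))).
Proof.
  intros HF HG y. unfold laplacian. rewrite <- !Csum_scal, <- !Csum_add.
  apply Csum_ext; intros j _. rewrite (pd_mul j F G) by auto.
  rewrite (pd_add j) by (apply pe_mul; auto; apply poly_expr_pd; auto).
  rewrite !pd_mul by (auto; apply poly_expr_pd; auto). Cring.
Qed.

Lemma pd_lap k P : poly_expr P -> pd k (laplacian n P) = laplacian n (pd k P).
Proof.
  intros HP. unfold laplacian at 1.
  rewrite (pd_Csum k (n + 1) (fun j => pd j (pd j P))) by (intros; do 2 apply poly_expr_pd; auto).
  apply functional_extensionality; intros y. apply Csum_ext; intros j _.
  rewrite (pd_comm (pd j P) (poly_expr_pd _ _ HP) k j), (pd_comm P HP k j). reflexivity.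
Qed.

Definition sqnorm (y : nat -> R) : Cx := Csum (n + 1) (fun j => Cmul (RtoC (y j)) (RtoC (y j))).

Lemma poly_expr_sqnorm : poly_expr sqnorm.
Proof. apply (poly_expr_Csum (n + 1) (fun j y => Cmul (RtoC (y j)) (RtoC (y j)))). intros; apply pe_mul; apply pe_var. Qed.

Lemma pd_sqnorm j : (j < n + 1)%nat -> pd j sqnorm = (fun y => Cmul (RtoC 2) (RtoC (y j))).
Proof.
  intros Hj. unfold sqnorm.
  rewrite (pd_Csum j (n + 1) (fun k y => Cmul (RtoC (y k)) (RtoC (y k)))) by (intros; apply pe_mul; apply pe_var).
  apply functional_extensionality; intros y.
  rewrite (Csum_ext _ _ (fun k => if Nat.eqb k j then Cmul (RtoC 2) (RtoC (y j)) else C0)) by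
    (intros k _; rewrite (pd_mul j (fun y => RtoC (y k)) (fun y => RtoC (y k))), pd_var by apply pe_var;
     destruct (Nat.eqb_spec k j) as [->|]; Cring).
  apply Csum_delta; auto.
Qed.

Lemma lap_sqnorm y : laplacian n sqnorm y = RtoC (2 * (INR n + 1)).
Proof.
  unfold laplacian. rewrite (Csum_ext _ _ (fun _ => RtoC 2)), Csum_const, plus_INR; [simpl INR; Cring|].
  intros j Hj. rewrite pd_sqnorm, pd_scal, pd_var, Nat.eqb_refl by (auto; apply pe_var). Cring.
Qed.

Lemma sqnorm_on_sphere z : on_sphere n z -> sqnorm z = RtoC 1.
Proof.
  intros H. unfold sqnorm. rewrite (Csum_ext _ _ (fun j => RtoC (z j ^ 2))) by (intros; Cring).
  rewrite Csum_RtoC, H. reflexivity.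
Qed.

Definition euler (d : nat) (f : sfun) : Prop := forall y,
  Csum (n + 1) (fun j => Cmul (RtoC (y j)) (pd j f y)) = Cmul (RtoC (INR d)) (f y).

Definition homogeneous (d : nat) (f : sfun) : Prop :=
  forall c y, f (fun i => c * y i) = Cmul (RtoC (c ^ d)) (f y).

Definition local (f : sfun) : Prop :=
  forall y y', (forall j, (j < n + 1)%nat -> y j = y' j) -> f y = f y'.

Record harm_homog (d : nat) (f : sfun) : Prop := {
  hh_poly : poly_expr f;
  hh_harmonic : harmonic n f;
  hh_euler : euler d f;
  hh_homogeneous : homogeneous d f;
  hh_local : local f }.

Lemma euler_const0 d : euler d (fun _ => C0).
Proof.
  intros y. rewrite (Csum_ext _ _ (fun _ => C0)), Csum_C0; [Cring|]. intros; rewrite pd_const; Cring.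
Qed.

Lemma euler_add d f g : poly_expr f -> poly_expr g -> euler d f -> euler d g ->
  euler d (fun y => Cadd (f y) (g y)).
Proof.
  intros Pf Pg Ef Eg y.
  rewrite (Csum_ext _ _ (fun j => Cadd (Cmul (RtoC (y j)) (pd j f y)) (Cmul (RtoC (y j)) (pd j g y))))
    by (intros; rewrite pd_add by auto; Cring).
  rewrite Csum_add, Ef, Eg. Cring.
Qed.

Lemma euler_scal d c f : poly_expr f -> euler d f -> euler d (fun y => Cmul c (f y)).
Proof.
  intros Pf Ef y.
  rewrite (Csum_ext _ _ (fun j => Cmul c (Cmul (RtoC (y j)) (pd j f y))))
    by (intros; rewrite pd_scal by auto; Cring).
  rewrite Csum_scal, Ef. Cring.
Qed.

Lemma euler_mul a b f g : poly_expr f -> poly_expr g -> euler a f -> euler b g ->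
  euler (a + b) (fun y => Cmul (f y) (g y)).
Proof.
  intros Pf Pg Ef Eg y.
  rewrite (Csum_ext _ _ (fun j => Cadd (Cmul (g y) (Cmul (RtoC (y j)) (pd j f y)))
                                      (Cmul (f y) (Cmul (RtoC (y j)) (pd j g y)))))
    by (intros; rewrite pd_mul by auto; Cring).
  rewrite Csum_add, !Csum_scal, Ef, Eg, plus_INR. Cring.
Qed.

Lemma euler_sqnorm : euler 2 sqnorm.
Proof.
  intros y. rewrite (Csum_ext _ _ (fun j => Cmul (RtoC 2) (Cmul (RtoC (y j)) (RtoC (y j))))).
  - rewrite Csum_scal. unfold sqnorm. simpl INR. Cring.
  - intros j Hj. rewrite pd_sqnorm by auto. Cring.
Qed.

Lemma euler_sqnorm_pow m : euler (2 * m) (fun y => Cpow (sqnorm y) m).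
Proof.
  induction m as [|m IH]; simpl Cpow.
  - rewrite Nat.mul_0_r. intros y. rewrite (Csum_ext _ _ (fun _ => C0)), Csum_C0; [Cring|].
    intros; rewrite pd_const; Cring.
  - replace (2 * S m)%nat with (2 * m + 2)%nat by lia.
    apply euler_mul; auto using poly_expr_Cpow, poly_expr_sqnorm, euler_sqnorm.
Qed.

Lemma homogeneous_sqnorm : homogeneous 2 sqnorm.
Proof. intros c y. unfold sqnorm. rewrite <- Csum_scal. apply Csum_ext. intros; Cring. Qed.

Lemma local_sqnorm : local sqnorm.
Proof. intros y y' E. apply Csum_ext. intros k Hk. rewrite E; auto. Qed.

Lemma homogeneous_Csum d K F : (forall k, (k < K)%nat -> homogeneous d (F k)) ->
  homogeneous d (fun y => Csum K (fun k => F k y)).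
Proof.
  intros H c y. induction K as [|K IH]; simpl; [Cring|].
  rewrite IH, H by (intros; try apply H; lia). Cring.
Qed.

Lemma local_Csum K F : (forall k, (k < K)%nat -> local (F k)) -> local (fun y => Csum K (fun k => F k y)).
Proof. intros H y y' E. apply Csum_ext. intros k Hk. apply H; auto. Qed.

Lemma harm_homog_zero d : harm_homog d (fun _ => C0).
Proof.
  split; [apply pe_const| |apply euler_const0|intros c y; Cring|intros y y' _; reflexivity].
  intros y. rewrite lap_const. reflexivity.
Qed.

Definition rsq_mul (m : nat) (Q : sfun) : sfun := fun y => Cmul (Cpow (sqnorm y) m) (Q y).

Lemma poly_expr_rsq_mul m Q : poly_expr Q -> poly_expr (rsq_mul m Q).
Proof. intros; apply pe_mul; auto. apply poly_expr_Cpow, poly_expr_sqnorm. Qed.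

Lemma euler_rsq_mul d m Q : poly_expr Q -> euler d Q -> euler (2 * m + d) (rsq_mul m Q).
Proof. intros; apply euler_mul; auto using poly_expr_Cpow, poly_expr_sqnorm, euler_sqnorm_pow. Qed.

Lemma homogeneous_rsq_mul d m Q : homogeneous d Q -> homogeneous (2 * m + d) (rsq_mul m Q).
Proof.
  intros H c y. unfold rsq_mul. rewrite H, pow_add.
  assert (Hp : Cpow (sqnorm (fun i => c * y i)) m = Cmul (RtoC (c ^ (2 * m))) (Cpow (sqnorm y) m)).
  { induction m as [|m IH]; simpl Cpow; [Cring|].
    rewrite IH, homogeneous_sqnorm. replace (2 * S m)%nat with (2 * m + 2)%nat by lia.
    rewrite pow_add. Cring. }
  rewrite Hp. Cring.
Qed.

Lemma local_rsq_mul m Q : local Q -> local (rsq_mul m Q).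
Proof.
  intros H y y' E. unfold rsq_mul. rewrite (H y y'), (local_sqnorm y y'); auto.
Qed.

Lemma rsq_mul_S m Q : rsq_mul (S m) Q = (fun y => Cmul (sqnorm y) (rsq_mul m Q y)).
Proof. apply functional_extensionality; intros y. unfold rsq_mul. simpl Cpow. Cring. Qed.

Lemma lap_sqnorm_mul d G : poly_expr G -> euler d G -> forall y,
  laplacian n (fun y => Cmul (sqnorm y) (G y)) y =
  Cadd (Cmul (sqnorm y) (laplacian n G y)) (Cmul (RtoC (2 * (INR n + 1) + 4 * INR d)) (G y)).
Proof.
  intros PG EG y. rewrite lap_mul, lap_sqnorm by (auto; apply poly_expr_sqnorm).
  rewrite (Csum_ext _ _ (fun j => Cmul (RtoC 2) (Cmul (RtoC (y j)) (pd j G y))))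
    by (intros j Hj; rewrite pd_sqnorm by auto; Cring).
  rewrite Csum_scal, EG. Cring.
Qed.

(* [lap_coef d m] is the factor in [Δ (r^(2m+2) Q) = lap_coef d m * r^(2m) Q] for [Q] harmonic
   of degree [d]. *)
Fixpoint lap_coef (d m : nat) : R :=
  match m with
  | O => 2 * (INR n + 1) + 4 * INR d
  | S m' => lap_coef d m' + (2 * (INR n + 1) + 4 * INR (2 * S m' + d))
  end.

Lemma lap_coef_pos d m : 0 < lap_coef d m.
Proof.
  induction m as [|m IH]; cbn [lap_coef]; pose proof (pos_INR n).
  - pose proof (pos_INR d); lra.
  - pose proof (pos_INR (2 * S m + d)); lra.
Qed.

Lemma lap_rsq_mul_S d Q : harm_homog d Q -> forall m,
  laplacian n (rsq_mul (S m) Q) = (fun y => Cmul (RtoC (lap_coef d m)) (rsq_mul m Q y)).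
Proof.
  intros [P H E _ _]. induction m as [|m IH]; apply functional_extensionality; intros y; rewrite rsq_mul_S.
  - rewrite (lap_sqnorm_mul d _ (poly_expr_rsq_mul 0 Q P) (euler_rsq_mul d 0 Q P E)).
    unfold rsq_mul. simpl Cpow. rewrite lap_scal, H by auto. simpl lap_coef. Cring.
  - rewrite (lap_sqnorm_mul (2 * S m + d) _ (poly_expr_rsq_mul _ Q P) (euler_rsq_mul d _ Q P E)).
    rewrite IH, rsq_mul_S. simpl lap_coef. Cring.
Qed.

Fixpoint lap_iter (a : nat) (f : sfun) : sfun :=
  match a with O => f | S a' => laplacian n (lap_iter a' f) end.

Lemma poly_expr_lap_iter a f : poly_expr f -> poly_expr (lap_iter a f).
Proof. intros; induction a; simpl; auto using poly_expr_lap. Qed.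

Lemma lap_iter_zero a : lap_iter a (fun _ => C0) = (fun _ => C0).
Proof. induction a as [|a IH]; simpl; [reflexivity|]. rewrite IH. apply lap_const. Qed.

Lemma lap_iter_add a b f : lap_iter (a + b) f = lap_iter a (lap_iter b f).
Proof. induction a as [|a IH]; simpl; congruence. Qed.

Lemma lap_iter_Csum a K F : (forall k, (k < K)%nat -> poly_expr (F k)) ->
  lap_iter a (fun y => Csum K (fun k => F k y)) = (fun y => Csum K (fun k => lap_iter a (F k) y)).
Proof.
  intros H. induction a as [|a IH]; simpl; [reflexivity|].
  rewrite IH. apply lap_Csum. intros; apply poly_expr_lap_iter; auto.
Qed.

Lemma lap_iter_rsq_mul d Q : harm_homog d Q -> forall a b, (a <= b)%nat ->
  exists c, c <> 0 /\ lap_iter a (rsq_mul b Q) = (fun y => Cmul (RtoC c) (rsq_mul (b - a) Q y)).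
Proof.
  intros HQ. induction a as [|a IH]; intros b Hab.
  - exists 1. split; [lra|]. apply functional_extensionality; intros y. rewrite Nat.sub_0_r. simpl. Cring.
  - destruct (IH b) as [c [Hc Ec]]; [lia|]. exists (c * lap_coef d (b - S a)). split.
    + pose proof (lap_coef_pos d (b - S a)). intros Z; apply Rmult_integral in Z; lra.
    + simpl lap_iter. rewrite Ec, lap_scal by (apply poly_expr_rsq_mul, HQ).
      replace (b - a)%nat with (S (b - S a)) by lia. rewrite (lap_rsq_mul_S d) by auto.
      apply functional_extensionality; intros y. Cring.
Qed.

Lemma lap_iter_rsq_mul_gt d Q : harm_homog d Q -> forall a b, (b < a)%nat ->
  lap_iter a (rsq_mul b Q) = (fun _ => C0).
Proof.
  intros HQ a b Hab. destruct (lap_iter_rsq_mul d Q HQ b b (le_n b)) as [c [Hc Ec]].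
  replace a with ((a - S b) + S b)%nat by lia. rewrite lap_iter_add. simpl lap_iter at 2.
  rewrite Ec, lap_scal, Nat.sub_diag by (apply poly_expr_rsq_mul, HQ).
  replace (laplacian n (rsq_mul 0 Q)) with (fun _ : nat -> R => C0).
  - replace (fun y : nat -> R => Cmul (RtoC c) C0) with (fun _ : nat -> R => C0)
      by (apply functional_extensionality; intros; Cring).
    apply lap_iter_zero.
  - apply functional_extensionality; intros y. unfold rsq_mul. simpl Cpow.
    rewrite lap_scal, (hh_harmonic _ _ HQ) by apply HQ. Cring.
Qed.

(* [Δ^(K-1)] annihilates every term but the first, which it maps to a nonzero multiple of [Q 0]. *)
Lemma rsq_expansion_head_zero K (deg : nat -> nat) (Q : nat -> sfun) :
  (forall i, (i <= K)%nat -> harm_homog (deg i) (Q i)) ->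
  (forall y, Csum (S K) (fun i => rsq_mul (K - i) (Q i) y) = C0) -> forall y, Q O y = C0.
Proof.
  intros HQ Hs.
  assert (Hpoly : forall i, (i < S K)%nat -> poly_expr (rsq_mul (K - i) (Q i)))
    by (intros i Hi; apply poly_expr_rsq_mul, (hh_poly _ _ (HQ i ltac:(lia)))).
  assert (HK := f_equal (lap_iter K) (functional_extensionality _ _ Hs : _ = fun _ => C0)).
  rewrite lap_iter_Csum, lap_iter_zero in HK by auto.
  destruct (lap_iter_rsq_mul _ _ (HQ O ltac:(lia)) K K (le_n K)) as [c [Hc Ec]].
  intros y. apply (f_equal (fun F => F y)) in HK. cbv beta in HK.
  rewrite Csum_first, Nat.sub_0_r in HK.
  rewrite (Csum_ext _ _ (fun _ => C0)), Csum_C0, Cadd_0_r in HK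
    by (intros k Hk; rewrite (lap_iter_rsq_mul_gt (deg (S k))) by (try apply HQ; lia); reflexivity).
  change (lap_iter K (rsq_mul K (Q O)) y = C0) in HK.
  rewrite Ec, Nat.sub_diag in HK. unfold rsq_mul in HK. simpl Cpow in HK. rewrite Cmul_1_l in HK.
  eapply Cmul_RtoC_eq0; eauto.
Qed.

Lemma rsq_expansion_zero K (deg : nat -> nat) (Q : nat -> sfun) :
  (forall i, (i < K)%nat -> harm_homog (deg i) (Q i)) ->
  (forall y, Csum K (fun i => rsq_mul (K - 1 - i) (Q i) y) = C0) ->
  forall i, (i < K)%nat -> forall y, Q i y = C0.
Proof.
  revert deg Q. induction K as [|K IH]; intros deg Q HQ Hs i Hi; [lia|].
  assert (Q0 : forall y, Q O y = C0).
  { apply (rsq_expansion_head_zero K deg); [intros; apply HQ; lia|].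
    intros y. rewrite <- (Hs y). apply Csum_ext. intros; f_equal; lia. }
  destruct i as [|i]; [apply Q0|].
  apply (IH (fun i => deg (S i)) (fun i => Q (S i))); [intros; apply HQ; lia| |lia].
  intros y. specialize (Hs y). rewrite Csum_first in Hs.
  unfold rsq_mul at 1 in Hs. rewrite Q0, Cmul_0_r, Cadd_0_l in Hs.
  rewrite <- Hs. apply Csum_ext. intros k Hk. f_equal. lia.
Qed.

(** * Harmonic homogeneous polynomials on the sphere *)

Lemma on_sphere_e0 : on_sphere n (fun i => if Nat.eqb i 0 then 1 else 0).
Proof.
  unfold on_sphere. rewrite (sumR_ext _ _ (fun i => if Nat.eqb i 0 then 1 else 0)).
  - apply sumR_delta. lia.
  - intros i _. destruct (Nat.eqb i 0); ring.
Qed.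

Lemma on_sphere_opp z : on_sphere n z -> on_sphere n (fun i => -1 * z i).
Proof. unfold on_sphere. intros H. rewrite <- H. apply sumR_ext. intros; ring. Qed.

(* Scale [y] onto the sphere; when [y] vanishes, use [y = 0 * e0]. *)
Lemma homogeneous_sphere_zero d f : homogeneous d f -> local f ->
  (forall z, on_sphere n z -> f z = C0) -> forall y, f y = C0.
Proof.
  intros Hf Lf Z y. set (s := sumR (n + 1) (fun j => y j ^ 2)).
  assert (Hs : 0 <= s) by (apply sumR_nonneg; intros; apply pow2_ge_0).
  destruct (Req_dec s 0) as [E|E].
  - rewrite (Lf y (fun i => 0 * (if Nat.eqb i 0 then 1 else 0))).
    + rewrite Hf, Z by apply on_sphere_e0. Cring.
    + intros j Hj. assert (y j ^ 2 = 0) by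
        (apply (sumR_nonneg_eq0 (n + 1) (fun j => y j ^ 2)); auto; intros; apply pow2_ge_0).
      replace (y j) with 0 by nra. ring.
  - set (c := sqrt s). assert (Hc : 0 < c) by (apply sqrt_lt_R0; lra).
    assert (Hc2 : c ^ 2 = s) by (unfold c; rewrite pow2_sqrt; lra).
    assert (Hz : on_sphere n (fun i => y i / c)).
    { unfold on_sphere. rewrite (sumR_ext _ _ (fun j => / c ^ 2 * y j ^ 2)) by (intros; field; lra).
      rewrite sumR_scal. fold s. rewrite Hc2. field. lra. }
    replace y with (fun i => c * (y i / c)) by (apply functional_extensionality; intros; field; lra).
    rewrite Hf, Z by auto. Cring.
Qed.

(* On the sphere [r^(2m) = 1], so a vanishing sum of harmonic polynomials of degrees [2i + p]
   is a vanishing homogeneous expansion [Σ r^(2(K-1-i)) Q_i] of degree [2(K-1) + p]. *)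
Lemma harm_homog_same_parity_zero K (Q : nat -> sfun) p :
  (forall i, (i < K)%nat -> harm_homog (2 * i + p) (Q i)) ->
  (forall z, on_sphere n z -> Csum K (fun i => Q i z) = C0) ->
  forall i, (i < K)%nat -> forall y, Q i y = C0.
Proof.
  intros HQ Hs. apply (rsq_expansion_zero K (fun i => (2 * i + p)%nat) Q HQ).
  apply (homogeneous_sphere_zero (2 * (K - 1) + p)).
  - apply homogeneous_Csum. intros k Hk.
    replace (2 * (K - 1) + p)%nat with (2 * (K - 1 - k) + (2 * k + p))%nat by lia.
    apply homogeneous_rsq_mul, HQ, Hk.
  - apply local_Csum. intros k Hk. apply local_rsq_mul, HQ, Hk.
  - intros z Hz. rewrite <- (Hs z Hz). apply Csum_ext. intros k Hk.
    unfold rsq_mul. rewrite sqnorm_on_sphere, Cpow_1 by auto. apply Cmul_1_l.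
Qed.

(* Evaluating at [-z] separates the even and odd degrees. *)
Lemma harm_homog_parity_split K (P : nat -> sfun) :
  (forall k, harm_homog k (P k)) ->
  (forall z, on_sphere n z -> Csum (2 * K) (fun k => P k z) = C0) -> forall z, on_sphere n z ->
  Csum K (fun i => P (2 * i)%nat z) = C0 /\ Csum K (fun i => P (2 * i + 1)%nat z) = C0.
Proof.
  intros HP Hs z Hz.
  pose proof (Hs z Hz) as Hplus. pose proof (Hs _ (on_sphere_opp z Hz)) as Hminus.
  rewrite Csum_even_odd in Hplus, Hminus.
  rewrite (Csum_ext K (fun i => P (2 * i)%nat _) (fun i => P (2 * i)%nat z)) in Hminus.
  2: { intros i _. rewrite (hh_homogeneous _ _ (HP _)), pow_mult.
       replace ((-1) ^ 2) with 1 by ring. rewrite pow1. apply Cmul_1_l. }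
  rewrite (Csum_ext K (fun i => P (2 * i + 1)%nat _) (fun i => Cmul (RtoC (-1)) (P (2 * i + 1)%nat z)))
    in Hminus.
  2: { intros i _. rewrite (hh_homogeneous _ _ (HP _)), pow_add, pow_mult.
       replace ((-1) ^ 2) with 1 by ring. rewrite pow1, pow_1, Rmult_1_l. reflexivity. }
  rewrite Csum_scal in Hminus.
  destruct (Csum K (fun i => P (2 * i)%nat z)) as [a b], (Csum K (fun i => P (2 * i + 1)%nat z)) as [c d].
  injection Hplus; injection Hminus; simpl; intros.
  split; apply Cx_ext; simpl; lra.
Qed.

Lemma harm_homog_sum_sphere_zero K (P : nat -> sfun) :
  (forall k, (k < K)%nat -> harm_homog k (P k)) ->
  (forall z, on_sphere n z -> Csum K (fun k => P k z) = C0) ->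
  forall k, (k < K)%nat -> forall z, on_sphere n z -> P k z = C0.
Proof.
  intros HP Hs.
  set (P' := fun k => if Nat.ltb k K then P k else (fun _ : nat -> R => C0)).
  assert (HP' : forall k, harm_homog k (P' k)).
  { intros k. unfold P'. destruct (Nat.ltb_spec k K); auto using harm_homog_zero. }
  assert (Hs' : forall z, on_sphere n z -> Csum (2 * K) (fun k => P' k z) = C0).
  { intros z Hz. rewrite <- (Hs z Hz), <- (Csum_trunc (2 * K) K) by lia.
    apply Csum_ext. intros k _. unfold P'. destruct (Nat.ltb k K); reflexivity. }
  pose proof (harm_homog_parity_split K P' HP' Hs') as Hsplit.
  intros k Hk z Hz. replace (P k) with (P' k) by (unfold P'; destruct (Nat.ltb_spec k K); [reflexivity|lia]).
  destruct (Nat.Even_or_Odd k) as [[i ->]|[i ->]].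
  - apply (harm_homog_same_parity_zero K (fun i => P' (2 * i)%nat) 0); [|apply Hsplit|lia].
    intros; rewrite Nat.add_0_r; apply HP'.
  - apply (harm_homog_same_parity_zero K (fun i => P' (2 * i + 1)%nat) 1); [|apply Hsplit|lia].
    intros; apply HP'.
Qed.

End Laplacian.

(** * Polynomials as lists of monomials *)

Definition has_pdR (k : nat) (u u' : (nat -> R) -> R) : Prop :=
  forall y, derivable_pt_lim (fun t => u (shift y k t)) 0 (u' y).

Lemma has_pdR_pow k i a :
  has_pdR k (fun y => y i ^ a) (fun y => if Nat.eqb i k then INR a * y i ^ (a - 1) else 0).
Proof.
  intros y. unfold shift. destruct (Nat.eqb_spec i k) as [->|].
  - eapply D_ext.
    + apply (derivable_pt_lim_comp (fun t => y k + t) (fun x => x ^ a)); [apply D_translate|apply derivable_pt_lim_pow].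
    + reflexivity.
    + rewrite Rplus_0_r, Nat.sub_1_r. ring.
  - eapply D_ext; [apply D_const|reflexivity|reflexivity].
Qed.

Definition dec_exp (e : nat -> nat) (k : nat) : nat -> nat :=
  fun i => if Nat.eqb i k then (e i - 1)%nat else e i.

Lemma has_pdR_prod k m e : has_pdR k (fun y => prodR m (fun i => y i ^ e i))
  (fun y => if Nat.ltb k m then INR (e k) * prodR m (fun i => y i ^ dec_exp e k i) else 0).
Proof.
  induction m as [|m IH]; intros y; simpl prodR; [apply D_const|].
  eapply D_ext; [apply D_mult; [apply IH|apply has_pdR_pow]|reflexivity|]. cbv beta. rewrite shift0.
  destruct (Nat.ltb_spec k m), (Nat.ltb_spec k (S m)), (Nat.eqb_spec m k); try lia.
  - replace (dec_exp e k m) with (e m) by (unfold dec_exp; destruct (Nat.eqb_spec m k); [lia|reflexivity]).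
    ring.
  - subst. replace (dec_exp e k k) with (e k - 1)%nat by (unfold dec_exp; rewrite Nat.eqb_refl; reflexivity).
    rewrite (prodR_ext k (fun i => y i ^ dec_exp e k i) (fun i => y i ^ e i)); [ring|].
    intros i Hi. unfold dec_exp. destruct (Nat.eqb_spec i k); [lia|reflexivity].
  - ring.
Qed.

Definition homog_poly (n l : nat) (ps : list (Cx * (nat -> nat))) : Prop :=
  Forall (fun m => sumN (n + 1) (snd m) = l) ps.

Section Polynomials.
Variable n : nat.

Lemma evalP_nil : evalP n nil = (fun _ => C0).
Proof. reflexivity. Qed.

Lemma evalP_cons m ps :
  evalP n (m :: ps) = (fun y => Cadd (Cmul (fst m) (RtoC (monom n (snd m) y))) (evalP n ps y)).
Proof. reflexivity. Qed.

Lemma evalP_app ps qs y : evalP n (ps ++ qs) y = Cadd (evalP n ps y) (evalP n qs y).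
Proof. induction ps as [|a ps IH]; simpl app; [simpl; Cring|]. rewrite !evalP_cons. cbv beta. rewrite IH. Cring. Qed.

Lemma monom_zero y : monom n (fun _ => O) y = 1.
Proof. unfold monom. rewrite (prodR_ext _ _ (fun _ => 1)), prodR_one by reflexivity. reflexivity. Qed.

Lemma poly_expr_monom e : poly_expr (fun y => RtoC (monom n e y)).
Proof.
  unfold monom. generalize (n + 1)%nat as m. induction m as [|m IH]; simpl prodR; [apply pe_const|].
  replace (fun y => RtoC (prodR m (fun i => y i ^ e i) * y m ^ e m))
    with (fun y => Cmul (RtoC (prodR m (fun i => y i ^ e i))) (RtoC (y m ^ e m)))
    by (apply functional_extensionality; intros; Cring).
  apply pe_mul; auto. induction (e m) as [|a IHa]; simpl pow; [apply pe_const|].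
  replace (fun y : nat -> R => RtoC (y m * y m ^ a)) with (fun y => Cmul (RtoC (y m)) (RtoC (y m ^ a)))
    by (apply functional_extensionality; intros; Cring).
  apply pe_mul; auto using pe_var.
Qed.

Lemma poly_expr_evalP ps : poly_expr (evalP n ps).
Proof.
  induction ps as [|m ps IH]; [rewrite evalP_nil; apply pe_const|]. rewrite evalP_cons.
  apply pe_add; auto. apply pe_mul; auto using pe_const, poly_expr_monom.
Qed.

Lemma monom_has_pd k e : (k < n + 1)%nat ->
  has_pd k (fun y => RtoC (monom n e y)) (fun y => RtoC (INR (e k) * monom n (dec_exp e k) y)).
Proof.
  intros Hk y. split; simpl; [|apply D_const].
  pose proof (has_pdR_prod k (n + 1) e y) as H. destruct (Nat.ltb_spec k (n + 1)); [exact H|lia].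
Qed.

Definition pd_poly (k : nat) (ps : list (Cx * (nat -> nat))) : list (Cx * (nat -> nat)) :=
  map (fun m => (Cscale (INR (snd m k)) (fst m), dec_exp (snd m) k))
      (filter (fun m => Nat.ltb 0 (snd m k)) ps).

Lemma pd_evalP k ps : (k < n + 1)%nat -> pd k (evalP n ps) = evalP n (pd_poly k ps).
Proof.
  intros Hk. apply has_pd_eq. induction ps as [|[c e] ps IH]; [apply (has_pd_const k C0)|].
  rewrite evalP_cons. simpl fst; simpl snd.
  eapply has_pd_ext; [apply has_pd_add; [apply has_pd_mul; [apply has_pd_const|apply monom_has_pd, Hk]|exact IH]|].
  intros y. unfold pd_poly. simpl filter.
  destruct (Nat.ltb_spec 0 (e k)).
  - cbn [map]. rewrite evalP_cons. fold (pd_poly k ps). cbn [fst snd]. unfold Cscale. Cring.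
  - fold (pd_poly k ps). replace (e k) with O by lia. simpl INR. Cring.
Qed.

Lemma homog_poly_pd k l ps : (k < n + 1)%nat -> homog_poly n l ps -> homog_poly n (l - 1) (pd_poly k ps).
Proof.
  intros Hk F. unfold pd_poly, homog_poly in *. apply Forall_map, Forall_forall. intros [c e] Hin.
  apply filter_In in Hin as [Hin Hp]. simpl in *. apply Nat.ltb_lt in Hp.
  rewrite Forall_forall in F. specialize (F _ Hin). simpl in F. subst l.
  assert (Hsum : forall m, (k < m)%nat -> sumN m (dec_exp e k) = (sumN m e - 1)%nat).
  { induction m as [|m IH]; simpl; intros Hm; [lia|]. unfold dec_exp at 2.
    destruct (Nat.eqb_spec m k) as [->|].
    - rewrite (sumN_ext k (dec_exp e k) e); [lia|].
      intros i Hi. unfold dec_exp. destruct (Nat.eqb_spec i k); [lia|reflexivity].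
    - pose proof (sumN_ge m e k ltac:(lia)). rewrite IH; lia. }
  apply Hsum, Hk.
Qed.

Lemma pd_poly_deg0 k ps : (k < n + 1)%nat -> homog_poly n 0 ps -> pd_poly k ps = nil.
Proof.
  intros Hk F. unfold pd_poly. induction F as [|x ps Hx _ IH]; [reflexivity|].
  simpl. rewrite (sumN_eq0 (n + 1) (snd x) k Hx Hk). exact IH.
Qed.

Lemma harmonic_pd k f : poly_expr f -> harmonic n f -> harmonic n (pd k f).
Proof.
  intros Pf H y. rewrite <- pd_lap by auto.
  replace (laplacian n f) with (fun _ : nat -> R => C0) by (apply functional_extensionality; intros; rewrite H; auto).
  rewrite pd_const. reflexivity.
Qed.

Lemma euler_monom e : euler n (sumN (n + 1) e) (fun y => RtoC (monom n e y)).
Proof.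
  intros y. assert (Hsum : forall m, Csum m (fun j => RtoC (INR (e j) * monom n e y)) =
                                     RtoC (INR (sumN m e) * monom n e y)).
  { induction m as [|m IH]; simpl; [Cring|]. rewrite IH, plus_INR. Cring. }
  transitivity (RtoC (INR (sumN (n + 1) e) * monom n e y)); [|Cring].
  rewrite <- Hsum. apply Csum_ext. intros j Hj. rewrite (has_pd_eq _ _ _ (monom_has_pd j e Hj)).
  destruct (Nat.eq_dec (e j) 0) as [E|E]; [rewrite E; simpl INR; Cring|].
  unfold monom. rewrite (prodR_factor (n + 1) (fun i => y i ^ e i) (fun i => y i ^ dec_exp e j i) j (y j));
    [Cring|exact Hj| |].
  - intros i Hi. unfold dec_exp. destruct (Nat.eqb_spec i j); [contradiction|reflexivity].
  - unfold dec_exp. rewrite Nat.eqb_refl. destruct (e j) as [|a]; [lia|]. simpl. rewrite Nat.sub_0_r. reflexivity.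
Qed.

Lemma euler_evalP d ps : homog_poly n d ps -> euler n d (evalP n ps).
Proof.
  induction 1 as [|m ps Hm _ IH]; [apply euler_const0|]. rewrite evalP_cons.
  apply euler_add; auto using poly_expr_evalP.
  - apply pe_mul; auto using pe_const, poly_expr_monom.
  - apply euler_scal; [apply poly_expr_monom|]. rewrite <- Hm. apply euler_monom.
Qed.

Lemma homogeneous_evalP d ps : homog_poly n d ps -> homogeneous d (evalP n ps).
Proof.
  induction 1 as [|m ps Hm _ IH]; intros c y; [simpl; Cring|]. rewrite !evalP_cons. cbv beta.
  rewrite IH. rewrite <- Hm. unfold monom.
  assert (Hp : forall k, prodR k (fun j => (c * y j) ^ snd m j) =
                         c ^ sumN k (snd m) * prodR k (fun j => y j ^ snd m j)).
  { induction k as [|k IHk]; simpl; [ring|]. rewrite IHk, pow_add, Rpow_mult_distr. ring. }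
  rewrite Hp. Cring.
Qed.

Lemma local_evalP ps : local n (evalP n ps).
Proof.
  intros y y' H. induction ps as [|m ps IH]; [reflexivity|]. rewrite !evalP_cons. cbv beta.
  rewrite IH. unfold monom. rewrite (prodR_ext _ (fun j => y j ^ snd m j) (fun j => y' j ^ snd m j));
    [reflexivity|]. intros; rewrite H; auto.
Qed.

Lemma harm_homog_evalP d ps : homog_poly n d ps -> harmonic n (evalP n ps) -> harm_homog n d (evalP n ps).
Proof.
  intros F H. split; auto using poly_expr_evalP, euler_evalP, homogeneous_evalP, local_evalP.
Qed.

Definition scale_poly (a : Cx) (ps : list (Cx * (nat -> nat))) : list (Cx * (nat -> nat)) :=
  map (fun m => (Cmul a (fst m), snd m)) ps.

Lemma evalP_scale_poly a ps y : evalP n (scale_poly a ps) y = Cmul a (evalP n ps y).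
Proof. induction ps as [|m ps IH]; [simpl; Cring|]. simpl scale_poly. rewrite !evalP_cons. cbv beta. rewrite IH. simpl. Cring. Qed.

Lemma Vsp_evalP l ps : homog_poly n l ps -> harmonic n (evalP n ps) -> Vsp n l (evalP n ps).
Proof. intros F H. exists ps. auto. Qed.

Lemma Vsp_sphere_ext l f g : Vsp n l f -> (forall y, on_sphere n y -> g y = f y) -> Vsp n l g.
Proof. intros [ps [F [H E]]] E'. exists ps. split; [|split]; auto. intros; rewrite E'; auto. Qed.

Lemma Vsp_zero l : Vsp n l (fun _ => C0).
Proof. exists nil. split; [constructor|split; [|reflexivity]]. intros y. rewrite evalP_nil, lap_const. reflexivity. Qed.

Lemma Vsp_const c : Vsp n 0 (fun _ => c).
Proof.
  exists ((c, fun _ => O) :: nil).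
  assert (E : evalP n ((c, fun _ => O) :: nil) = fun _ => c)
    by (apply functional_extensionality; intros y; rewrite evalP_cons; cbv beta; simpl; rewrite monom_zero; Cring).
  split; [constructor; [apply sumN_zero|constructor]|]. rewrite E. split; [|reflexivity].
  intros y. rewrite lap_const. reflexivity.
Qed.

Lemma Vsp_scal l a f : Vsp n l f -> Vsp n l (fun y => Cmul a (f y)).
Proof.
  intros [ps [F [H E]]]. exists (scale_poly a ps). split; [|split].
  - apply Forall_map. eapply Forall_impl; [|exact F]. auto.
  - intros y. replace (evalP n (scale_poly a ps)) with (fun y => Cmul a (evalP n ps y))
      by (apply functional_extensionality; intros; rewrite evalP_scale_poly; auto).
    rewrite lap_scal, H by apply poly_expr_evalP. Cring.
  - intros y Hy. rewrite evalP_scale_poly, E; auto.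
Qed.

Lemma Vsp_add l f g : Vsp n l f -> Vsp n l g -> Vsp n l (fun y => Cadd (f y) (g y)).
Proof.
  intros [ps [F [H E]]] [qs [G [K E']]]. exists (ps ++ qs). split; [|split].
  - apply Forall_app. auto.
  - intros y. replace (evalP n (ps ++ qs)) with (fun y => Cadd (evalP n ps y) (evalP n qs y))
      by (apply functional_extensionality; intros; rewrite evalP_app; auto).
    rewrite lap_add, H, K by apply poly_expr_evalP. Cring.
  - intros y Hy. rewrite evalP_app, E, E'; auto.
Qed.

Lemma Vsp_pd_poly k l ps : (k < n + 1)%nat -> homog_poly n l ps -> harmonic n (evalP n ps) ->
  Vsp n (l - 1) (evalP n (pd_poly k ps)).
Proof.
  intros Hk F H. apply Vsp_evalP; [apply homog_poly_pd; auto|].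
  rewrite <- pd_evalP by auto. apply harmonic_pd; auto using poly_expr_evalP.
Qed.

Lemma Vsp_harm_homog l f : Vsp n l f ->
  exists P, harm_homog n l P /\ forall y, on_sphere n y -> f y = P y.
Proof. intros [ps [F [H E]]]. exists (evalP n ps). split; auto using harm_homog_evalP. Qed.

Lemma Vsp_sum_sphere_zero K (F : nat -> sfun) : (forall k, (k < K)%nat -> Vsp n k (F k)) ->
  (forall z, on_sphere n z -> Csum K (fun k => F k z) = C0) ->
  forall k, (k < K)%nat -> forall z, on_sphere n z -> F k z = C0.
Proof.
  intros HF Hs.
  set (W := fun k => epsilon (inhabits (fun _ : nat -> R => C0))
                       (fun P => harm_homog n k P /\ forall y, on_sphere n y -> F k y = P y)).
  assert (HW : forall k, (k < K)%nat -> harm_homog n k (W k) /\ forall y, on_sphere n y -> F k y = W k y)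
    by (intros k Hk; apply epsilon_spec, Vsp_harm_homog, HF, Hk).
  intros k Hk z Hz. rewrite (proj2 (HW k Hk)) by auto.
  apply (harm_homog_sum_sphere_zero n K W); auto; [intros; apply HW; auto|].
  intros y Hy. rewrite <- (Hs y Hy). apply Csum_ext. intros i Hi. symmetry. apply HW; auto.
Qed.

End Polynomials.

(** * The functional calculus on a single [V_d] *)

Section FunctionalCalculus.
Variable n : nat.

Lemma is_decomp_Vsp d h f K F : Vsp n d h -> (forall y, on_sphere n y -> f y = h y) ->
  is_decomp n f (K, F) -> forall k z, on_sphere n z ->
  (if Nat.ltb k K then F k z else C0) = (if Nat.eqb k d then h z else C0).
Proof.
  intros Hh Hf [HV HS] k z Hz. simpl fst in *; simpl snd in *.
  set (M := max K (S d)).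
  set (A := fun k => if Nat.ltb k K then F k else (fun _ : nat -> R => C0)).
  set (B := fun k => if Nat.eqb k d then h else (fun _ : nat -> R => C0)).
  assert (HA : forall k, Vsp n k (A k))
    by (intros i; unfold A; destruct (Nat.ltb_spec i K); auto using Vsp_zero).
  assert (HB : forall k, Vsp n k (B k))
    by (intros i; unfold B; destruct (Nat.eqb_spec i d) as [->|]; auto using Vsp_zero).
  assert (SA : forall y, on_sphere n y -> Csum M (fun k => A k y) = f y).
  { intros y Hy. rewrite HS, <- (Csum_trunc M K) by (auto; lia).
    apply Csum_ext. intros i _. unfold A. destruct (Nat.ltb i K); reflexivity. }
  assert (SB : forall y, on_sphere n y -> Csum M (fun k => B k y) = f y).
  { intros y Hy. rewrite Hf, <- (Csum_delta M d (h y)) by (auto; lia).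
    apply Csum_ext. intros i _. unfold B. destruct (Nat.eqb i d); reflexivity. }
  destruct (Nat.ltb_spec k M).
  - assert (E : A k z = B k z).
    { apply Cadd_opp_eq0.
      apply (Vsp_sum_sphere_zero n M (fun k y => Cadd (A k y) (Cmul (RtoC (-1)) (B k y)))); auto.
      + intros i _. apply Vsp_add, Vsp_scal; auto.
      + intros y Hy. rewrite Csum_add, Csum_scal, SA, SB by auto. Cring. }
    unfold A, B in E. destruct (Nat.ltb k K), (Nat.eqb k d); exact E.
  - destruct (Nat.ltb_spec k K), (Nat.eqb_spec k d); reflexivity || lia.
Qed.

Lemma fcalc_Vsp g f d h : Vsp n d h -> (forall y, on_sphere n y -> f y = h y) ->
  forall z, on_sphere n z -> fcalc n g f z = Cscale (g (eig n d)) (h z).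
Proof.
  intros Hh Hf z Hz. unfold fcalc.
  set (p := epsilon (inhabits (O, fun (_ : nat) (_ : nat -> R) => C0)) (is_decomp n f)).
  assert (Hp : is_decomp n f p).
  { apply epsilon_spec. exists (S d, fun k => if Nat.eqb k d then h else (fun _ => C0)). split.
    - intros k _. simpl snd. destruct (Nat.eqb_spec k d) as [->|]; auto using Vsp_zero.
    - intros y Hy. simpl. rewrite Nat.eqb_refl, Hf by auto.
      rewrite (Csum_ext d _ (fun _ => C0)), Csum_C0 by (intros k Hk; destruct (Nat.eqb_spec k d); [lia|reflexivity]).
      Cring. }
  destruct p as [K F]. simpl fst; simpl snd.
  rewrite <- (Csum_trunc (max K (S d)) K) by lia.
  rewrite <- (Csum_delta (max K (S d)) d (Cscale (g (eig n d)) (h z))) by lia.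
  apply Csum_ext. intros k _. pose proof (is_decomp_Vsp d h f K F Hh Hf Hp k z Hz) as E.
  destruct (Nat.ltb_spec k K); destruct (Nat.eqb_spec k d); subst.
  - rewrite E. reflexivity.
  - rewrite E. apply Cscale_C0.
  - rewrite <- E. symmetry. apply Cscale_C0.
  - reflexivity.
Qed.

End FunctionalCalculus.

Lemma rot0 k j y : rot k j 0 y = y.
Proof.
  apply functional_extensionality; intros i. unfold rot. rewrite cos_0, sin_0.
  destruct (Nat.eqb k j); [reflexivity|].
  destruct (Nat.eqb_spec i j) as [->|]; [ring|]. destruct (Nat.eqb_spec i k) as [->|]; [ring|reflexivity].
Qed.

Lemma rot_on_sphere n k j t y : (k < n + 1)%nat -> (j < n + 1)%nat ->
  on_sphere n y -> on_sphere n (rot k j t y).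
Proof.
  intros Hk Hj H. unfold on_sphere in *. unfold rot. destruct (Nat.eqb_spec k j); [exact H|].
  set (A := (y j * cos t + y k * sin t) ^ 2 - y j ^ 2).
  set (B := (y k * cos t - y j * sin t) ^ 2 - y k ^ 2).
  rewrite (sumR_ext _ _ (fun i => y i ^ 2 + (if Nat.eqb i j then A else 0) + (if Nat.eqb i k then B else 0))).
  - rewrite !sumR_add, !sumR_delta, H by auto. unfold A, B.
    pose proof (sin2_cos2 t) as Hsc. unfold Rsqr in Hsc. nra.
  - intros i _. destruct (Nat.eqb_spec i j) as [->|]; [|destruct (Nat.eqb_spec i k) as [->|]].
    + destruct (Nat.eqb_spec j k); [lia|]. unfold A. ring.
    + unfold B. ring.
    + ring.
Qed.

Definition ang_mom (f : sfun) (k j : nat) (y : nat -> R) : Cx :=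
  Cadd (Cmul (RtoC (y k)) (pd j f y)) (Cmul (RtoC (- y j)) (pd k f y)).

Lemma rot_coord_deriv k j i y : derivable_pt_lim (fun t => rot k j t y i) 0
  (y k * (if Nat.eqb i j then 1 else 0) + - y j * (if Nat.eqb i k then 1 else 0)).
Proof.
  unfold rot. destruct (Nat.eqb_spec k j) as [->|].
  - eapply D_ext; [apply D_const|reflexivity|]. destruct (Nat.eqb i j); ring.
  - destruct (Nat.eqb_spec i j) as [->|]; [|destruct (Nat.eqb_spec i k)].
    + destruct (Nat.eqb_spec j k); [lia|].
      eapply D_ext; [apply D_plus; [apply D_scal_cos|apply D_scal_sin]|reflexivity|ring].
    + eapply D_ext; [apply D_minus; [apply D_scal_cos|apply D_scal_sin]|reflexivity|ring].
    + eapply D_ext; [apply D_const|reflexivity|ring].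
Qed.

Lemma rot_deriv f : poly_expr f -> forall k j y,
  derivable_pt_lim (fun t => Cre (f (rot k j t y))) 0 (Cre (ang_mom f k j y)) /\
  derivable_pt_lim (fun t => Cim (f (rot k j t y))) 0 (Cim (ang_mom f k j y)).
Proof.
  induction 1 as [c|i|f g Pf IHf Pg IHg|f g Pf IHf Pg IHg]; intros k j y; unfold ang_mom.
  - rewrite !pd_const. split; (eapply D_ext; [apply D_const|reflexivity|simpl; ring]).
  - rewrite !pd_var. split; simpl.
    + eapply D_ext; [apply rot_coord_deriv|reflexivity|ring].
    + eapply D_ext; [apply D_const|reflexivity|ring].
  - rewrite !pd_add by auto. destruct (IHf k j y) as [a b], (IHg k j y) as [c d]. unfold ang_mom in *.
    split; simpl.
    + eapply D_ext; [apply D_plus; [exact a|exact c]|reflexivity|simpl; ring].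
    + eapply D_ext; [apply D_plus; [exact b|exact d]|reflexivity|simpl; ring].
  - rewrite !pd_mul by auto. destruct (IHf k j y) as [a b], (IHg k j y) as [c d]. unfold ang_mom in *.
    split; simpl.
    + eapply D_ext; [apply D_minus; [apply D_mult; [exact a|exact c]|apply D_mult; [exact b|exact d]]|reflexivity|].
      cbv beta. rewrite rot0. simpl. ring.
    + eapply D_ext; [apply D_plus; [apply D_mult; [exact a|exact d]|apply D_mult; [exact b|exact c]]|reflexivity|].
      cbv beta. rewrite rot0. simpl. ring.
Qed.

(* [Lvf] only sees [f] on the sphere, since the rotations preserve it. *)
Lemma Lvf_poly_expr n k j F G y : (k < n + 1)%nat -> (j < n + 1)%nat -> on_sphere n y -> poly_expr G ->
  (forall z, on_sphere n z -> F z = G z) -> Lvf k j F y = ang_mom G k j y.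
Proof.
  intros Hk Hj Hy PG E. unfold Lvf.
  replace (fun t => Cre (F (rot k j t y))) with (fun t => Cre (G (rot k j t y)))
    by (apply functional_extensionality; intros t; rewrite E; auto using rot_on_sphere).
  replace (fun t => Cim (F (rot k j t y))) with (fun t => Cim (G (rot k j t y)))
    by (apply functional_extensionality; intros t; rewrite E; auto using rot_on_sphere).
  destruct (rot_deriv G PG k j y) as [a b]. rewrite (deriv0_eq _ _ a), (deriv0_eq _ _ b).
  destruct (ang_mom G k j y); reflexivity.
Qed.

(** * The operators [E_k] and [A_k] on [V_l] *)

Section Operators.
Variables (n : nat) (hbar : R).

Definition M_symbol (lam : R) : R := sqrt (2 / (INR n - 1)) * sqrt (sqrt lam).

Lemma sqrt_eig l : (1 <= n)%nat -> sqrt (eig n l) = INR l + (INR n - 1) / 2.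
Proof.
  intros H. unfold eig. apply sqrt_pow2. apply le_INR in H. simpl in H. pose proof (pos_INR l). lra.
Qed.

Lemma M_symbol_ratio l : (2 <= n)%nat -> (1 <= l)%nat ->
  M_symbol (eig n (l - 1)) / M_symbol (eig n l) =
  sqrt ((2 * (INR l - 1) + INR n - 1) / (2 * INR l + INR n - 1)).
Proof.
  intros Hn Hl. unfold M_symbol. rewrite !sqrt_eig, minus_INR by lia. simpl INR.
  apply le_INR in Hn. apply le_INR in Hl. simpl in Hn, Hl.
  assert (Hs : 0 < sqrt (2 / (INR n - 1))) by (apply sqrt_lt_R0, Rdiv_lt_0_compat; lra).
  assert (Hb : 0 < sqrt (INR l + (INR n - 1) / 2)) by (apply sqrt_lt_R0; lra).
  transitivity (sqrt (INR l - 1 + (INR n - 1) / 2) / sqrt (INR l + (INR n - 1) / 2)); [field; lra|].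
  rewrite <- sqrt_div_alt by lra. f_equal. field. lra.
Qed.

(* On the sphere [(-i)^2 = -1] and Euler's identity make the radial parts of [E_k] cancel. *)
Lemma Eop_sphere l k f P : (1 <= n)%nat -> (k < n + 1)%nat -> Vsp n l f -> poly_expr P -> euler n l P ->
  (forall y, on_sphere n y -> f y = P y) ->
  forall y, on_sphere n y -> Eop n hbar k f y = Cmul (RtoC hbar) (pd k P y).
Proof.
  intros Hn Hk Hf PP EP E y Hy. unfold Eop, xmul.
  rewrite (Csum_ext _ _ (fun j => Cadd (Cmul (RtoC (- hbar * y k)) (Cmul (RtoC (y j)) (pd j P y)))
                                     (Cmul (Cmul (RtoC hbar) (pd k P y)) (Cmul (RtoC (y j)) (RtoC (y j))))))
    by (intros j Hj; rewrite (Lvf_poly_expr n k j f P y) by auto; unfold ang_mom; Cring).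
  rewrite Csum_add, !Csum_scal, EP.
  change (Csum (n + 1) (fun j => Cmul (RtoC (y j)) (RtoC (y j)))) with (sqnorm n y).
  unfold Nop. rewrite (fcalc_Vsp n _ f l f), sqrt_eig, E, sqnorm_on_sphere by (auto; lia).
  unfold Cscale. Cring.
Qed.

Lemma Aop_Vsp_pd l k ps f : (1 <= n)%nat -> (k < n + 1)%nat ->
  homog_poly n l ps -> harmonic n (evalP n ps) -> (forall y, on_sphere n y -> f y = evalP n ps y) ->
  forall z, on_sphere n z ->
  Aop n hbar k f z = Cscale (hbar * (M_symbol (eig n (l - 1)) / M_symbol (eig n l))) (pd k (evalP n ps) z).
Proof.
  intros Hn Hk F Hh Hf z Hz.
  set (c := / M_symbol (eig n l)). set (P := fun y => Cmul (RtoC c) (evalP n ps y)).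
  assert (Hps : Vsp n l (evalP n ps)) by (apply Vsp_evalP; auto).
  assert (Hf' : Vsp n l f) by exact (Vsp_sphere_ext n l _ f Hps Hf).
  assert (HP : Vsp n l P) by (apply Vsp_scal; auto).
  assert (PP : poly_expr P) by (apply pe_mul; auto using pe_const, poly_expr_evalP).
  assert (Hinv : forall y, on_sphere n y -> Minv n f y = P y).
  { intros y Hy. unfold Minv. rewrite (fcalc_Vsp n _ f l f) by auto.
    unfold P, c, M_symbol. rewrite Hf by auto. reflexivity. }
  assert (HE : forall y, on_sphere n y ->
            Eop n hbar k (Minv n f) y = Cmul (RtoC (hbar * c)) (evalP n (pd_poly k ps) y)).
  { intros y Hy. rewrite (Eop_sphere l k (Minv n f) P) by
      (auto; try lia; try exact (Vsp_sphere_ext n l P _ HP Hinv);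
       apply euler_scal; auto using poly_expr_evalP, euler_evalP).
    unfold P. rewrite pd_scal, pd_evalP by (auto using poly_expr_evalP). Cring. }
  unfold Aop, Mop. rewrite (fcalc_Vsp n _ _ (l - 1) _ (Vsp_scal n _ _ _ (Vsp_pd_poly n k l ps Hk F Hh)) HE z Hz).
  rewrite pd_evalP by auto. fold (M_symbol (eig n (l - 1))). unfold c, Rdiv, Cscale. Cring.
Qed.

End Operators.

(** * Powers of isotropic linear forms *)

Section LinearForms.
Variable n : nat.

Definition pmul (ps qs : list (Cx * (nat -> nat))) : list (Cx * (nat -> nat)) :=
  flat_map (fun a => map (fun b => (Cmul (fst a) (fst b), fun i => (snd a i + snd b i)%nat)) qs) ps.

Lemma evalP_pmul ps qs y : evalP n (pmul ps qs) y = Cmul (evalP n ps y) (evalP n qs y).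
Proof.
  assert (Hmonom : forall e e', monom n (fun i => (e i + e' i)%nat) y = monom n e y * monom n e' y).
  { intros e e'. unfold monom. generalize (n + 1)%nat as m.
    induction m as [|m IHm]; simpl; [ring|]. rewrite IHm, pow_add. ring. }
  assert (Hrow : forall a : Cx * (nat -> nat),
    evalP n (map (fun b => (Cmul (fst a) (fst b), fun i => (snd a i + snd b i)%nat)) qs) y =
    Cmul (Cmul (fst a) (RtoC (monom n (snd a) y))) (evalP n qs y)).
  { intros a. induction qs as [|b qs IHq]; [simpl; Cring|]. simpl map. rewrite !evalP_cons. cbv beta.
    rewrite IHq. simpl fst; simpl snd. rewrite Hmonom. Cring. }
  induction ps as [|a ps IH]; [simpl; Cring|]. unfold pmul. simpl flat_map.
  rewrite evalP_app. fold (pmul ps qs). rewrite IH, Hrow, evalP_cons. Cring.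
Qed.

Lemma homog_poly_pmul a b ps qs : homog_poly n a ps -> homog_poly n b qs -> homog_poly n (a + b) (pmul ps qs).
Proof.
  intros F G. apply Forall_forall. intros x Hx. unfold pmul in Hx. apply in_flat_map in Hx as [u [Hu Hx]].
  apply in_map_iff in Hx as [v [<- Hv]]. simpl. rewrite sumN_add.
  unfold homog_poly in F, G. rewrite Forall_forall in F, G. rewrite (F u Hu), (G v Hv). reflexivity.
Qed.

Lemma homog_poly_Cpow ps m : homog_poly n 1 ps ->
  exists qs, homog_poly n m qs /\ evalP n qs = (fun y => Cpow (evalP n ps y) m).
Proof.
  intros F. induction m as [|m [qs [G E]]].
  - exists ((Defs.C1, fun _ => O) :: nil). split.
    + constructor; [apply sumN_zero|constructor].
    + apply functional_extensionality; intros y. rewrite evalP_cons. simpl. rewrite monom_zero. Cring.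
  - exists (pmul qs ps). split.
    + rewrite <- Nat.add_1_r. apply homog_poly_pmul; auto.
    + apply functional_extensionality; intros y. rewrite evalP_pmul, E. reflexivity.
Qed.

Definition linear_poly (alpha : nat -> Cx) : list (Cx * (nat -> nat)) :=
  map (fun j => (alpha j, fun i => if Nat.eqb i j then 1%nat else O)) (seq 0 (n + 1)).

Lemma evalP_linear_poly alpha : evalP n (linear_poly alpha) = adot n alpha.
Proof.
  apply functional_extensionality; intros y. unfold linear_poly, adot.
  assert (Hmonom : forall j, (j < n + 1)%nat -> monom n (fun i => if Nat.eqb i j then 1%nat else O) y = y j).
  { intros j Hj. unfold monom. rewrite (prodR_factor (n + 1) _ (fun _ => 1) j (y j)), prodR_one; auto.
    - ring.
    - intros i Hi. destruct (Nat.eqb_spec i j); [contradiction|reflexivity].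
    - rewrite Nat.eqb_refl. simpl. ring. }
  enough (H : forall m, (m <= n + 1)%nat ->
    evalP n (map (fun j => (alpha j, fun i => if Nat.eqb i j then 1%nat else O)) (seq 0 m)) y =
    Csum m (fun j => Cmul (alpha j) (RtoC (y j)))) by auto.
  induction m as [|m IH]; intros Hm; [reflexivity|].
  rewrite seq_S, map_app, evalP_app, IH by lia. simpl map. rewrite evalP_cons. cbv beta.
  simpl fst; simpl snd. rewrite Hmonom by lia. simpl. Cring.
Qed.

Lemma homog_poly_linear alpha : homog_poly n 1 (linear_poly alpha).
Proof.
  apply Forall_map, Forall_forall. intros j Hj. apply in_seq in Hj. apply sumN_delta. lia.
Qed.

Lemma poly_expr_adot alpha : poly_expr (adot n alpha).
Proof. rewrite <- evalP_linear_poly. apply poly_expr_evalP. Qed.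

Lemma pd_adot alpha j : (j < n + 1)%nat -> pd j (adot n alpha) = (fun _ => alpha j).
Proof.
  intros Hj. unfold adot.
  rewrite (pd_Csum j (n + 1) (fun k y => Cmul (alpha k) (RtoC (y k)))) by (intros; apply pe_mul; auto using pe_const, pe_var).
  apply functional_extensionality; intros y.
  rewrite (Csum_ext _ _ (fun k => if Nat.eqb k j then alpha j else C0)) by
    (intros k _; rewrite pd_scal, pd_var by apply pe_var; destruct (Nat.eqb_spec k j) as [->|]; Cring).
  apply Csum_delta; auto.
Qed.

Lemma pd_adot_pow alpha l k : (k < n + 1)%nat ->
  pd k (fun y => Cpow (adot n alpha y) l) = (fun y => Cmul (RtoC (INR l)) (Cmul (Cpow (adot n alpha y) (l - 1)) (alpha k))).
Proof. intros Hk. rewrite pd_Cpow, pd_adot by auto using poly_expr_adot. reflexivity. Qed.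

(* [Δ (α·x)^l = l (l - 1) (α·α) (α·x)^(l-2)]. *)
Lemma harmonic_adot_pow alpha l : Csum (n + 1) (fun j => Cmul (alpha j) (alpha j)) = C0 ->
  harmonic n (fun y => Cpow (adot n alpha y) l).
Proof.
  intros Hiso y. unfold laplacian.
  rewrite (Csum_ext _ _ (fun j => Cmul (Cmul (RtoC (INR l)) (Cmul (RtoC (INR (l - 1))) (Cpow (adot n alpha y) (l - 1 - 1))))
                                      (Cmul (alpha j) (alpha j)))).
  - rewrite Csum_scal, Hiso. Cring.
  - intros j Hj. rewrite pd_adot_pow, pd_scal, pd_mul, pd_Cpow, pd_adot, pd_const
      by (auto using poly_expr_Cpow, poly_expr_adot, pe_mul, pe_const). Cring.
Qed.

Lemma Vsp_adot_pow alpha l : Csum (n + 1) (fun j => Cmul (alpha j) (alpha j)) = C0 ->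
  exists ps, homog_poly n l ps /\ harmonic n (evalP n ps) /\
             evalP n ps = (fun y => Cpow (adot n alpha y) l).
Proof.
  intros Hiso. destruct (homog_poly_Cpow (linear_poly alpha) l (homog_poly_linear alpha)) as [ps [F E]].
  rewrite evalP_linear_poly in E. exists ps. rewrite E. auto using harmonic_adot_pow.
Qed.

End LinearForms.

Section Consequences.
Variables (n : nat) (hbar : R).
Hypothesis n_ge1 : (1 <= n)%nat.

Lemma Aop_Vsp k l f : (k < n + 1)%nat -> Vsp n l f -> Vsp n (l - 1) (Aop n hbar k f).
Proof.
  intros Hk [ps [F [H E]]].
  apply (Vsp_sphere_ext n (l - 1)
    (fun y => Cmul (RtoC (hbar * (M_symbol n (eig n (l - 1)) / M_symbol n (eig n l)))) (evalP n (pd_poly k ps) y))).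
  - apply Vsp_scal, Vsp_pd_poly; auto.
  - intros y Hy. rewrite (Aop_Vsp_pd n hbar l k ps), pd_evalP by auto. reflexivity.
Qed.

Lemma Aop_Vsp0 k f : (k < n + 1)%nat -> Vsp n 0 f -> forall y, on_sphere n y -> Aop n hbar k f y = C0.
Proof.
  intros Hk [ps [F [H E]]] y Hy.
  rewrite (Aop_Vsp_pd n hbar 0 k ps), pd_evalP, (pd_poly_deg0 n) by auto. apply Cscale_C0.
Qed.

Lemma Aop_adot_pow alpha l k : (2 <= n)%nat -> Csum (n + 1) (fun j => Cmul (alpha j) (alpha j)) = C0 ->
  (1 <= l)%nat -> (k < n + 1)%nat -> forall y, on_sphere n y ->
  Aop n hbar k (fun x => Cpow (adot n alpha x) l) y =
  Cscale (hbar * INR l * sqrt ((2 * (INR l - 1) + INR n - 1) / (2 * INR l + INR n - 1)))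
         (Cmul (alpha k) (Cpow (adot n alpha y) (l - 1))).
Proof.
  intros Hn Hiso Hl Hk y Hy. destruct (Vsp_adot_pow n alpha l Hiso) as [ps [F [H E]]].
  rewrite (Aop_Vsp_pd n hbar l k ps) by (auto; intros; rewrite E; reflexivity).
  rewrite E, pd_adot_pow, M_symbol_ratio by auto. unfold Cscale. Cring.
Qed.

End Consequences.

Theorem mainTheorem13 (n : nat) (hbar : R) :
  (n = 2%nat \/ n = 3%nat \/ n = 5%nat) -> 0 < hbar ->
  (forall (alpha : nat -> Cx) (l k : nat),
      Csum (n + 1) (fun j => Cmul (alpha j) (alpha j)) = C0 ->
      (1 <= l)%nat -> (k < n + 1)%nat ->
      forall y, on_sphere n y ->
        Aop n hbar k (fun x => Cpow (adot n alpha x) l) y =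
        Cscale (hbar * INR l *
                sqrt ((2 * (INR l - 1) + INR n - 1) / (2 * INR l + INR n - 1)))
               (Cmul (alpha k) (Cpow (adot n alpha y) (l - 1)))) /\
  (forall (k : nat) (c : Cx), (k < n + 1)%nat ->
      forall y, on_sphere n y -> Aop n hbar k (fun _ => c) y = C0) /\
  (forall (k l : nat) (f : sfun), (k < n + 1)%nat -> (0 < l)%nat ->
      Vsp n l f -> Vsp n (l - 1) (Aop n hbar k f)) /\
  (forall (k : nat) (f : sfun), (k < n + 1)%nat -> Vsp n 0 f ->
      forall y, on_sphere n y -> Aop n hbar k f y = C0).
Proof.
  intros Hn _. assert (Hn1 : (1 <= n)%nat) by lia. split; [|split; [|split]].
  - intros alpha l k. apply (Aop_adot_pow n hbar Hn1). lia.
  - intros k c Hk. apply (Aop_Vsp0 n hbar Hn1); auto using Vsp_const.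
  - intros k l f Hk _. apply (Aop_Vsp n hbar Hn1); auto.
  - intros k f Hk. apply (Aop_Vsp0 n hbar Hn1); auto.
Qed.
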